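(* Let $\lambda>0$, $p\in\mathbb{N}$, and let $f\in C^p\left[0,\frac12\lambda^{-1/2}\right]$ be real-valued. Write $\max$ for the maximum over $\left[0,\frac12\lambda^{-1/2}\right]$. Then at least one of the following inequalities holds: $$\max|f'|\le4^{p+\frac12}\lambda^{\frac12}\max|f|,\qquad\text{or}\qquad \max|f'|\le\left(\frac{\max|f^{(p)}|}{\max|f|}\right)^{\frac1p}4^{p-\frac12}\max|f|.$$ *)

From Stdlib Require Import Reals.
Open Scope R_scope.

Definition deriv_within (a b : R) (g : R -> R) (x l : R) : Prop :=
  forall eps : R, 0 < eps -> exists delta : R, 0 < delta /\
    forall y : R, a <= y <= b -> y <> x -> Rabs (y - x) < delta ->
      Rabs ((g y - g x) / (y - x) - l) < eps.

Definition cont_on (a b : R) (g : R -> R) : Prop :=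
  forall x : R, a <= x <= b ->
  forall eps : R, 0 < eps -> exists delta : R, 0 < delta /\
    forall y : R, a <= y <= b -> Rabs (y - x) < delta -> Rabs (g y - g x) < eps.

(* D is a family of successive derivatives of D 0 on [a,b] up to order p,
   with D p continuous: i.e. D 0 is in C^p[a,b] with D k = its k-th derivative. *)
Definition Cp_derivs (a b : R) (p : nat) (D : nat -> R -> R) : Prop :=
  cont_on a b (D p) /\
  forall k : nat, (k < p)%nat -> forall x : R, a <= x <= b ->
    deriv_within a b (D k) x (D (S k) x).

Definition is_max_on (a b : R) (g : R -> R) (M : R) : Prop :=
  (exists x : R, a <= x <= b /\ g x = M) /\
  (forall x : R, a <= x <= b -> g x <= M).

(* Real power a^y for a >= 0 and y > 0, with the convention 0^y = 0
   (Stdlib's Rpower would give Rpower 0 y = 1). *)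
Definition rpow (a y : R) : R := if Rle_dec a 0 then 0 else Rpower a y.

(* For every step 0 < h <= L/2 on an interval of length L one has
   |f'(x)| <= 4^(p-1) (max|f| / h + max|f^(p)| h^(p-1)).  Indeed, Richardson
   extrapolation of the difference quotients (f(x+t) - f(x))/t at the steps t = 2^i s,
   i <= p-2, |s| = h/2^(p-2), with the sign of s chosen so that x+t stays in the
   interval, is exact on the Taylor polynomial of f at x and returns f'(x); what is
   left comes from the differences of f, bounded by 2 max|f|, and from the Taylor
   remainder, bounded by max|f^(p)| |t|^p.  Here L/2 = lambda^(-1/2)/4, and the two
   alternatives correspond to h = L/2 and to the balancing step
   h = (max|f| / max|f^(p)|)^(1/p) when the latter is smaller. *)

From Stdlib Require Import Reals Factorial Lra Lia.
From Coquelicot Require Import Coquelicot.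
Open Scope R_scope.

Fixpoint poly_sum (c : nat -> R) (n : nat) (s : R) : R :=
  match n with O => 0 | S n => poly_sum c n s + c n * s ^ n end.

Lemma poly_sum_ext c d n s : (forall k, c k = d k) -> poly_sum c n s = poly_sum d n s.
Proof. intros Hcd. induction n as [|n IH]; simpl; [reflexivity|]. now rewrite IH, Hcd. Qed.

Lemma poly_sum_Sl c n s : poly_sum c (S n) s = c 0%nat + s * poly_sum (fun k => c (S k)) n s.
Proof.
  induction n as [|n IH]; [simpl; ring|].
  change (poly_sum c (S (S n)) s) with (poly_sum c (S n) s + c (S n) * s ^ S n).
  rewrite IH. simpl. ring.
Qed.

Lemma is_derive_poly_sum c n s :
  is_derive (poly_sum c (S n)) s (poly_sum (fun k => INR (S k) * c (S k)) n s).
Proof.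
  induction n as [|n IH].
  - simpl. auto_derive; [exact I|ring].
  - apply (is_derive_plus (poly_sum c (S n)) (fun t => c (S n) * t ^ S n)); [exact IH|].
    auto_derive; [exact I|]. rewrite S_INR. destruct n; simpl; ring.
Qed.

Lemma INR_fact_S_div n x : INR (S n) * x / INR (fact (S n)) = x / INR (fact n).
Proof.
  rewrite fact_simpl, mult_INR. pose proof (INR_fact_neq_0 n).
  assert (INR (S n) <> 0) by (apply not_0_INR; lia). field; auto.
Qed.

(* The n terms of degree < n, with D k standing for the k-th derivative. *)
Definition taylor (D : nat -> R -> R) (n : nat) (x y : R) : R :=
  poly_sum (fun k => D k x / INR (fact k)) n (y - x).

Lemma taylor_at D n x : taylor D (S n) x x = D 0%nat x.
Proof. unfold taylor. rewrite poly_sum_Sl, Rminus_diag. simpl. field. Qed.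

Lemma is_derive_taylor D n x y :
  is_derive (taylor D (S n) x) y (taylor (fun k => D (S k)) n x y).
Proof.
  unfold taylor.
  replace (poly_sum (fun k => D (S k) x / INR (fact k)) n (y - x))
    with (1 * poly_sum (fun k => INR (S k) * (D (S k) x / INR (fact (S k)))) n (y - x)).
  - apply (is_derive_comp (poly_sum _ (S n)) (fun z => z - x)).
    + apply is_derive_poly_sum.
    + auto_derive; [exact I|ring].
  - rewrite Rmult_1_l. apply poly_sum_ext. intros k.
    rewrite <- (INR_fact_S_div k (D (S k) x)). unfold Rdiv. ring.
Qed.

Lemma is_derive_pow_div_fact n x y :
  is_derive (fun z => (z - x) ^ S n / INR (fact (S n))) y
    ((y - x) ^ n / INR (fact n)).
Proof.
  set (c := INR (fact (S n))).
  auto_derive; [exact I|]. unfold c. rewrite <- (INR_fact_S_div n).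
  change (match n with 0%nat => 1 | S _ => INR n + 1 end) with (INR (S n)).
  change (y + - x) with (y - x). unfold Rdiv. ring.
Qed.

Lemma is_derive_pow_div_fact_rev n x y :
  is_derive (fun z => - ((x - z) ^ S n / INR (fact (S n)))) y
    ((x - y) ^ n / INR (fact n)).
Proof.
  set (c := INR (fact (S n))).
  auto_derive; [exact I|]. unfold c. rewrite <- (INR_fact_S_div n).
  change (match n with 0%nat => 1 | S _ => INR n + 1 end) with (INR (S n)).
  change (x + - y) with (x - y). unfold Rdiv. ring.
Qed.

(* Richardson extrapolation: step k combines the values at s and 2 s so that a term
   in s^k cancels; richardson_weight m j is the factor by which s^j survives. *)
Fixpoint richardson (m : nat) (phi : R -> R) (s : R) : R :=
  match m with
  | O => phi s
  | S k => (2 ^ S k * richardson k phi s - richardson k phi (2 * s)) / (2 ^ S k - 1)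
  end.

Fixpoint richardson_weight (m j : nat) : R :=
  match m with
  | O => 1
  | S k => (2 ^ S k - 2 ^ j) / (2 ^ S k - 1) * richardson_weight k j
  end.

Lemma pow2_S_gt1 k : 1 < 2 ^ S k.
Proof. apply Rlt_pow_R1; [lra|lia]. Qed.

Lemma richardson_ext m phi psi s :
  (forall t, phi t = psi t) -> richardson m phi s = richardson m psi s.
Proof. intros H. revert s. induction m as [|m IH]; intros s; simpl; [auto|]. now rewrite !IH. Qed.

Lemma richardson_plus m phi psi s :
  richardson m (fun t => phi t + psi t) s = richardson m phi s + richardson m psi s.
Proof.
  revert s. induction m as [|m IH]; intros s; simpl; [reflexivity|]. rewrite !IH.
  pose proof (pow2_S_gt1 m). simpl in *. field. lra.
Qed.

Lemma richardson_scal m c phi s :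
  richardson m (fun t => c * phi t) s = c * richardson m phi s.
Proof.
  revert s. induction m as [|m IH]; intros s; simpl; [reflexivity|]. rewrite !IH.
  pose proof (pow2_S_gt1 m). simpl in *. field. lra.
Qed.

Lemma richardson_pow m j s :
  richardson m (fun t => t ^ j) s = richardson_weight m j * s ^ j.
Proof.
  revert s. induction m as [|m IH]; intros s; simpl; [ring|].
  rewrite !IH, Rpow_mult_distr. pose proof (pow2_S_gt1 m). simpl in *. field. lra.
Qed.

Lemma richardson_weight_0 m : richardson_weight m 0 = 1.
Proof.
  induction m as [|m IH]; simpl; [reflexivity|]. rewrite IH.
  pose proof (pow2_S_gt1 m). simpl in *. field. lra.
Qed.

Lemma richardson_weight_annihilates m j :
  (1 <= j <= m)%nat -> richardson_weight m j = 0.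
Proof.
  induction m as [|m IH]; intros Hj; [lia|]. simpl.
  destruct (Nat.eq_dec j (S m)) as [->|Hne].
  - unfold Rminus at 1. rewrite Rplus_opp_r. unfold Rdiv. ring.
  - rewrite IH by lia. ring.
Qed.

Lemma richardson_poly_sum m c n s :
  (n <= m)%nat -> richardson m (poly_sum c (S n)) s = c 0%nat.
Proof.
  induction n as [|n IH]; intros Hn.
  - rewrite (richardson_ext m _ (fun t => c 0%nat * t ^ 0)) by (intros; simpl; ring).
    rewrite richardson_scal, richardson_pow, richardson_weight_0. simpl. ring.
  - rewrite (richardson_ext m _ (fun t => poly_sum c (S n) t + c (S n) * t ^ S n))
      by reflexivity.
    rewrite richardson_plus, richardson_scal, richardson_pow, IH by lia.
    rewrite richardson_weight_annihilates by lia. ring.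
Qed.

Lemma richardson_abs_le m phi s B :
  (forall i, (i <= m)%nat -> Rabs (phi (2 ^ i * s)) <= B) ->
  Rabs (richardson m phi s) <= (2 ^ S m - 1) * B.
Proof.
  revert s. induction m as [|m IH]; intros s Hphi.
  - specialize (Hphi 0%nat (le_n _)). simpl in *. rewrite Rmult_1_l in Hphi. lra.
  - assert (Hr1 := IH s ltac:(intros i Hi; apply Hphi; lia)).
    assert (Hr2 : Rabs (richardson m phi (2 * s)) <= (2 ^ S m - 1) * B).
    { apply IH. intros i Hi. replace (2 ^ i * (2 * s)) with (2 ^ S i * s) by (simpl; ring).
      apply Hphi. lia. }
    assert (HB : 0 <= B).
    { specialize (Hphi 0%nat ltac:(lia)). pose proof (Rabs_pos (phi (2 ^ 0 * s))). lra. }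
    assert (HX : 2 <= 2 ^ S m) by (simpl; pose proof (pow_R1_Rle 2 m ltac:(lra)); lra).
    change (2 ^ S (S m)) with (2 * 2 ^ S m).
    cbn [richardson]. set (X := 2 ^ S m) in *.
    set (r1 := richardson m phi s) in *. set (r2 := richardson m phi (2 * s)) in *.
    assert (Hnum : Rabs (X * r1 - r2) <= (X + 1) * ((X - 1) * B)).
    { unfold Rminus at 1. eapply Rle_trans; [apply Rabs_triang|].
      rewrite Rabs_Ropp, Rabs_mult, (Rabs_right X) by lra.
      assert (X * Rabs r1 <= X * ((X - 1) * B)) by (apply Rmult_le_compat_l; lra). lra. }
    unfold Rdiv. rewrite Rabs_mult, Rabs_inv, (Rabs_right (X - 1)) by lra.
    apply Rle_trans with ((X + 1) * B).
    + apply Rmult_le_reg_r with (X - 1); [lra|].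
      rewrite Rmult_assoc, Rinv_l by lra. lra.
    + apply Rmult_le_compat_r; lra.
Qed.
Section Interval.

Variables a b : R.
Hypothesis Hab : a < b.

Lemma is_derive_deriv_within g x l : is_derive g x l -> deriv_within a b g x l.
Proof.
  intros Hg eps Heps. apply is_derive_Reals in Hg.
  destruct (Hg eps Heps) as [d Hd].
  exists d; split; [apply cond_pos|]; intros y _ Hyx Hlt.
  assert (Hh : y - x <> 0) by lra.
  specialize (Hd (y - x) Hh Hlt). now replace (x + (y - x)) with y in Hd by ring.
Qed.

Lemma deriv_within_plus g h x l m :
  deriv_within a b g x l -> deriv_within a b h x m ->
  deriv_within a b (fun z => g z + h z) x (l + m).
Proof.
  intros Hg Hh eps Heps.
  destruct (Hg (eps / 2)) as [d1 [Hd1 Hg']]; [lra|].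
  destruct (Hh (eps / 2)) as [d2 [Hd2 Hh']]; [lra|].
  exists (Rmin d1 d2); split; [now apply Rmin_glb_lt|]; intros y Hy Hyx Hlt.
  specialize (Hg' y Hy Hyx (Rlt_le_trans _ _ _ Hlt (Rmin_l _ _))).
  specialize (Hh' y Hy Hyx (Rlt_le_trans _ _ _ Hlt (Rmin_r _ _))).
  replace ((g y + h y - (g x + h x)) / (y - x) - (l + m))
    with (((g y - g x) / (y - x) - l) + ((h y - h x) / (y - x) - m)) by (field; lra).
  eapply Rle_lt_trans; [apply Rabs_triang|lra].
Qed.

Lemma deriv_within_opp g x l :
  deriv_within a b g x l -> deriv_within a b (fun z => - g z) x (- l).
Proof.
  intros Hg eps Heps. destruct (Hg eps Heps) as [d [Hd Hg']].
  exists d; split; [exact Hd|]; intros y Hy Hyx Hlt.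
  replace ((- g y - - g x) / (y - x) - - l) with (- ((g y - g x) / (y - x) - l))
    by (field; lra).
  rewrite Rabs_Ropp. auto.
Qed.

Lemma deriv_within_continuous g x l : a <= x <= b -> deriv_within a b g x l ->
  forall eps, 0 < eps -> exists delta, 0 < delta /\
    forall y, a <= y <= b -> Rabs (y - x) < delta -> Rabs (g y - g x) < eps.
Proof.
  intros Hx Hg eps Heps.
  destruct (Hg 1 Rlt_0_1) as [d [Hd Hg']].
  assert (Hl : 0 < Rabs l + 1) by (pose proof (Rabs_pos l); lra).
  exists (Rmin d (eps / (Rabs l + 1))); split.
  { apply Rmin_glb_lt; [exact Hd|]. now apply Rdiv_lt_0_compat. }
  intros y Hy Hlt.
  destruct (Req_dec y x) as [->|Hyx]; [now rewrite Rminus_diag, Rabs_R0|].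
  specialize (Hg' y Hy Hyx (Rlt_le_trans _ _ _ Hlt (Rmin_l _ _))).
  assert (Hq : Rabs ((g y - g x) / (y - x)) <= Rabs l + 1).
  { pose proof (Rabs_triang_inv ((g y - g x) / (y - x)) l). lra. }
  assert (Hs : Rabs (y - x) < eps / (Rabs l + 1))
    by exact (Rlt_le_trans _ _ _ Hlt (Rmin_r _ _)).
  replace (g y - g x) with ((g y - g x) / (y - x) * (y - x)) by (field; lra).
  rewrite Rabs_mult.
  apply Rle_lt_trans with ((Rabs l + 1) * Rabs (y - x)).
  { apply Rmult_le_compat_r; [apply Rabs_pos|exact Hq]. }
  apply Rmult_lt_reg_r with (/ (Rabs l + 1)); [now apply Rinv_0_lt_compat|].
  replace ((Rabs l + 1) * Rabs (y - x) * / (Rabs l + 1)) with (Rabs (y - x))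
    by (field; lra).
  exact Hs.
Qed.

Definition clamp (y : R) : R := Rmax a (Rmin b y).

Lemma clamp_id y : a <= y <= b -> clamp y = y.
Proof. intros Hy. unfold clamp. rewrite Rmin_right, Rmax_right; lra. Qed.

Lemma clamp_in y : a <= clamp y <= b.
Proof. unfold clamp, Rmax, Rmin. repeat destruct Rle_dec; lra. Qed.

Lemma clamp_lipschitz y z : Rabs (clamp y - clamp z) <= Rabs (y - z).
Proof.
  unfold clamp, Rmax, Rmin. repeat destruct Rle_dec; unfold Rabs;
  repeat destruct Rcase_abs; lra.
Qed.

(* Extending g constantly beyond [a,b] turns one-sided derivatives at interior
   points into ordinary ones, so that the mean value theorem of the library applies. *)
Lemma is_derive_clamp g x l : a < x < b -> deriv_within a b g x l ->
  is_derive (fun y => g (clamp y)) x l.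
Proof.
  intros Hx Hg. apply is_derive_Reals. intros eps Heps.
  destruct (Hg eps Heps) as [d [Hd Hg']].
  assert (Hr : 0 < Rmin d (Rmin (x - a) (b - x))) by (repeat apply Rmin_glb_lt; lra).
  exists (mkposreal _ Hr); intros t Ht Hlt; simpl in Hlt.
  assert (Hta : Rabs t < Rmin (x - a) (b - x)) by (eapply Rlt_le_trans; [exact Hlt|apply Rmin_r]).
  assert (Hts : Rabs t < x - a /\ Rabs t < b - x).
  { split; eapply Rlt_le_trans; try exact Hta; [apply Rmin_l|apply Rmin_r]. }
  pose proof (Rle_abs t). pose proof (Rle_abs (- t)). rewrite Rabs_Ropp in *.
  rewrite !clamp_id by lra.
  specialize (Hg' (x + t)). replace (x + t - x) with t in Hg' by ring.
  apply Hg'; [lra|lra|]. eapply Rlt_le_trans; [exact Hlt|apply Rmin_l].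
Qed.

Lemma continuity_pt_clamp g x l : a <= x <= b -> deriv_within a b g x l ->
  continuity_pt (fun y => g (clamp y)) x.
Proof.
  intros Hx Hg. apply continuity_pt_locally. intros eps.
  destruct (deriv_within_continuous g x l Hx Hg eps (cond_pos eps)) as [d [Hd Hc]].
  exists (mkposreal d Hd). intros y Hy. simpl. rewrite (clamp_id x Hx).
  apply Hc; [apply clamp_in|]. rewrite <- (clamp_id x Hx).
  eapply Rle_lt_trans; [apply clamp_lipschitz|exact Hy].
Qed.

Lemma deriv_within_nonneg_le g g' x y : a <= x -> x <= y -> y <= b ->
  (forall z, x <= z <= y -> deriv_within a b g z (g' z)) ->
  (forall z, x <= z <= y -> 0 <= g' z) -> g x <= g y.
Proof.
  intros Hax Hxy Hyb Hg Hpos.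
  destruct (Req_dec x y) as [<-|Hne]; [lra|].
  destruct (MVT_gen (fun z => g (clamp z)) x y g') as [c [Hc Heq]];
    rewrite Rmin_left, Rmax_right in * by lra.
  - intros z Hz. apply is_derive_clamp; [lra|]. apply Hg; lra.
  - intros z Hz. apply continuity_pt_clamp with (g' z); [lra|]. apply Hg; lra.
  - rewrite !clamp_id in Heq by lra.
    assert (0 <= g' c * (y - x)) by (apply Rmult_le_pos; [apply Hpos|]; lra).
    lra.
Qed.

Lemma deriv_within_abs_le g g' G G' x y : a <= x -> x <= y -> y <= b ->
  (forall z, x <= z <= y -> deriv_within a b g z (g' z)) ->
  (forall z, x <= z <= y -> deriv_within a b G z (G' z)) ->
  (forall z, x <= z <= y -> Rabs (g' z) <= G' z) ->
  Rabs (g y - g x) <= G y - G x.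
Proof.
  intros Hax Hxy Hyb Hg HG Hle. apply Rabs_le.
  assert (Hplus := deriv_within_nonneg_le (fun z => G z + g z) (fun z => G' z + g' z) x y).
  assert (Hminus := deriv_within_nonneg_le (fun z => G z + - g z) (fun z => G' z + - g' z) x y).
  cbv beta in Hplus, Hminus.
  assert (G x + g x <= G y + g y).
  { apply Hplus; auto; intros z Hz.
    - apply deriv_within_plus; auto.
    - specialize (Hle z Hz). apply Rabs_le_between in Hle. lra. }
  assert (G x + - g x <= G y + - g y).
  { apply Hminus; auto; intros z Hz.
    - apply deriv_within_plus, deriv_within_opp; auto.
    - specialize (Hle z Hz). apply Rabs_le_between in Hle. lra. }
  lra.
Qed.


Lemma exists_inward_direction x : a <= x <= b ->
  exists e, Rabs e = 1 /\ forall u, 0 <= u <= (b - a) / 2 -> a <= x + e * u <= b.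
Proof.
  intros Hx. destruct (Rle_dec x ((a + b) / 2)).
  - exists 1. rewrite Rabs_R1. split; [reflexivity|]. intros u Hu. lra.
  - exists (-1). split; [rewrite Rabs_left; lra|]. intros u Hu. lra.
Qed.

Lemma deriv_within_of_vanishing g x l : a <= x <= b ->
  (forall y, a <= y <= b -> g y = 0) -> deriv_within a b g x l -> l = 0.
Proof.
  intros Hx Hg Hd. destruct (Req_dec l 0) as [|Hl]; [assumption|exfalso].
  destruct (Hd (Rabs l) (Rabs_pos_lt _ Hl)) as [d [Hd0 Hd']].
  destruct (exists_inward_direction x Hx) as [e [He Hin]].
  set (u := Rmin (d / 2) ((b - a) / 2)).
  assert (Hu : 0 < u) by (apply Rmin_glb_lt; lra).
  assert (Hud : u <= d / 2) by apply Rmin_l.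
  assert (Hy := Hin u (conj (Rlt_le _ _ Hu) (Rmin_r _ _))).
  assert (Hdist : Rabs (x + e * u - x) = u).
  { replace (x + e * u - x) with (e * u) by ring. rewrite Rabs_mult, He, Rabs_right; lra. }
  assert (Hne : x + e * u <> x) by (intros E; rewrite E, Rminus_diag, Rabs_R0 in Hdist; lra).
  specialize (Hd' _ Hy Hne ltac:(lra)).
  rewrite (Hg _ Hy), (Hg _ Hx) in Hd'.
  replace ((0 - 0) / (x + e * u - x) - l) with (- l) in Hd' by (field; lra).
  rewrite Rabs_Ropp in Hd'. lra.
Qed.

Lemma dyadic_steps_in_interval x h m : a <= x <= b -> 0 < h <= (b - a) / 2 ->
  exists s, forall i, (i <= m)%nat ->
    a <= x + 2 ^ i * s <= b /\ h / 2 ^ m <= Rabs (2 ^ i * s) <= h.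
Proof.
  intros Hx Hh. destruct (exists_inward_direction x Hx) as [e [He Hin]].
  assert (H2m : 1 <= 2 ^ m) by (apply pow_R1_Rle; lra).
  set (u := h / 2 ^ m).
  assert (Hu : 0 < u) by (apply Rdiv_lt_0_compat; lra).
  assert (Hmax : 2 ^ m * u = h) by (unfold u; field; lra).
  exists (e * u). intros i Hi.
  assert (H2i : 1 <= 2 ^ i <= 2 ^ m) by (split; [apply pow_R1_Rle|apply Rle_pow]; lra || lia).
  assert (Habs : Rabs (2 ^ i * (e * u)) = 2 ^ i * u).
  { rewrite Rabs_mult, Rabs_mult, He, (Rabs_right (2 ^ i)), (Rabs_right u); lra. }
  assert (2 ^ i * u <= 2 ^ m * u) by (apply Rmult_le_compat_r; lra).
  assert (u <= 2 ^ i * u) by nra.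
  split.
  - replace (x + 2 ^ i * (e * u)) with (x + e * (2 ^ i * u)) by ring. apply Hin. lra.
  - rewrite Habs. lra.
Qed.

Lemma deriv_within_taylor_remainder D n x y : deriv_within a b (D 0%nat) y (D 1%nat y) ->
  deriv_within a b (fun z => D 0%nat z - taylor D (S n) x z) y
    (D 1%nat y - taylor (fun k => D (S k)) n x y).
Proof.
  intros HD. apply deriv_within_plus; [exact HD|].
  apply deriv_within_opp, is_derive_deriv_within, is_derive_taylor.
Qed.

Lemma taylor_remainder_abs_le n D B :
  (forall k, (k < n)%nat -> forall y, a <= y <= b -> deriv_within a b (D k) y (D (S k) y)) ->
  (forall y, a <= y <= b -> Rabs (D n y) <= B) ->
  forall x y, a <= x <= b -> a <= y <= b ->
  Rabs (D 0%nat y - taylor D n x y) <= B * (Rabs (y - x) ^ n / INR (fact n)).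
Proof.
  revert D B. induction n as [|n IH]; intros D B HD HB x y Hx Hy.
  - simpl. rewrite Rminus_0_r, Rdiv_1_r, Rmult_1_r. auto.
  - set (R := fun z => D 0%nat z - taylor D (S n) x z).
    set (R' := fun z => D 1%nat z - taylor (fun k => D (S k)) n x z).
    assert (HR : forall z, a <= z <= b -> deriv_within a b R z (R' z)).
    { intros z Hz. apply deriv_within_taylor_remainder, HD; [lia|exact Hz]. }
    assert (HR' : forall z, a <= z <= b ->
      Rabs (R' z) <= B * (Rabs (z - x) ^ n / INR (fact n))).
    { intros z Hz. apply (IH (fun k => D (S k))); auto.
      intros k Hk w Hw. apply HD; [lia|exact Hw]. }
    assert (HRx : R x = 0) by (unfold R; rewrite taylor_at; ring).
    change (D 0%nat y - taylor D (S n) x y) with (R y).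
    destruct (Rle_dec x y) as [Hxy|Hyx].
    + assert (Hcmp := deriv_within_abs_le R R'
        (fun z => B * ((z - x) ^ S n / INR (fact (S n))))
        (fun z => B * ((z - x) ^ n / INR (fact n))) x y).
      rewrite HRx, Rminus_0_r, Rminus_diag, pow_i, Rdiv_0_l, Rmult_0_r, Rminus_0_r in Hcmp by lia.
      rewrite (Rabs_right (y - x)) by lra. apply Hcmp; try lra.
      * intros z Hz. apply HR. lra.
      * intros z Hz. apply is_derive_deriv_within, is_derive_scal, is_derive_pow_div_fact.
      * intros z Hz. rewrite <- (Rabs_right (z - x)) by lra. apply HR'. lra.
    + assert (Hcmp := deriv_within_abs_le R R'
        (fun z => B * - ((x - z) ^ S n / INR (fact (S n))))
        (fun z => B * ((x - z) ^ n / INR (fact n))) y x).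
      rewrite HRx, Rminus_diag, pow_i, Rdiv_0_l, Ropp_0, Rmult_0_r, !Rminus_0_l, Rabs_Ropp
        in Hcmp by lia.
      rewrite Rabs_minus_sym, (Rabs_right (x - y)) by lra.
      replace (B * ((x - y) ^ S n / INR (fact (S n)))) with
        (- (B * - ((x - y) ^ S n / INR (fact (S n))))) by ring.
      apply Hcmp; try lra.
      * intros z Hz. apply HR. lra.
      * intros z Hz. apply is_derive_deriv_within, is_derive_scal, is_derive_pow_div_fact_rev.
      * intros z Hz. rewrite <- (Rabs_right (x - z)), Rabs_minus_sym by lra.
        apply HR'. lra.
Qed.

Lemma taylor_shift_Sl D n x t :
  taylor D (S n) x (x + t) =
  D 0%nat x + t * poly_sum (fun k => D (S k) x / INR (fact (S k))) n t.
Proof.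
  unfold taylor. rewrite poly_sum_Sl. replace (x + t - x) with t by ring. simpl. field.
Qed.

Lemma difference_quotient_abs_le g M x t :
  (forall y, a <= y <= b -> Rabs (g y) <= M) -> a <= x <= b -> a <= x + t <= b -> t <> 0 ->
  Rabs ((g (x + t) - g x) / t) <= 2 * M / Rabs t.
Proof.
  intros Hg Hx Hxt Ht. unfold Rdiv. rewrite Rabs_mult, Rabs_inv.
  apply Rmult_le_compat_r; [left; now apply Rinv_0_lt_compat, Rabs_pos_lt|].
  unfold Rminus. eapply Rle_trans; [apply Rabs_triang|]. rewrite Rabs_Ropp.
  pose proof (Hg _ Hx). pose proof (Hg _ Hxt). lra.
Qed.

Lemma taylor_quotient_abs_le n D B x t :
  (forall k, (k < S n)%nat -> forall y, a <= y <= b -> deriv_within a b (D k) y (D (S k) y)) ->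
  (forall y, a <= y <= b -> Rabs (D (S n) y) <= B) ->
  a <= x <= b -> a <= x + t <= b -> t <> 0 ->
  Rabs ((D 0%nat (x + t) - taylor D (S n) x (x + t)) / t) <= B * Rabs t ^ n.
Proof.
  intros HD HB Hx Hxt Ht.
  assert (Htpos : 0 < Rabs t) by now apply Rabs_pos_lt.
  assert (HB0 : 0 <= B) by (pose proof (HB x Hx); pose proof (Rabs_pos (D (S n) x)); lra).
  assert (Hrem := taylor_remainder_abs_le (S n) D B HD HB x (x + t) Hx Hxt).
  replace (x + t - x) with t in Hrem by ring.
  assert (Hfact : 1 <= INR (fact (S n))).
  { apply (le_INR 1). pose proof (Factorial.lt_O_fact (S n)). lia. }
  assert (Hpow : Rabs t ^ S n / INR (fact (S n)) <= Rabs t ^ S n).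
  { apply Rmult_le_reg_r with (INR (fact (S n))); [lra|].
    unfold Rdiv. rewrite Rmult_assoc, Rinv_l by lra.
    pose proof (pow_le (Rabs t) (S n) (Rabs_pos t)). nra. }
  unfold Rdiv at 1. rewrite Rabs_mult, Rabs_inv.
  apply Rmult_le_reg_r with (Rabs t); [exact Htpos|].
  rewrite Rmult_assoc, Rinv_l, Rmult_1_r by lra.
  replace (B * Rabs t ^ n * Rabs t) with (B * Rabs t ^ S n) by (simpl; ring).
  eapply Rle_trans; [exact Hrem|]. now apply Rmult_le_compat_l.
Qed.

Lemma deriv1_interpolation_bound n D M0 Mp x h :
  (forall k, (k < S n)%nat -> forall y, a <= y <= b -> deriv_within a b (D k) y (D (S k) y)) ->
  (forall y, a <= y <= b -> Rabs (D 0%nat y) <= M0) ->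
  (forall y, a <= y <= b -> Rabs (D (S n) y) <= Mp) ->
  a <= x <= b -> 0 < h <= (b - a) / 2 ->
  Rabs (D 1%nat x) <= 4 ^ n * (M0 / h + Mp * h ^ n).
Proof.
  intros HD H0 Hp Hx Hh.
  assert (HM0 : 0 <= M0) by (pose proof (H0 x Hx); pose proof (Rabs_pos (D 0%nat x)); lra).
  assert (HM0h : 0 <= M0 / h) by (apply Rdiv_le_0_compat; lra).
  destruct n as [|m].
  { simpl. pose proof (Hp x Hx). lra. }
  assert (HMp : 0 <= Mp) by (pose proof (Hp x Hx); pose proof (Rabs_pos (D (S (S m)) x)); lra).
  destruct (dyadic_steps_in_interval x h m Hx Hh) as [s Hnode].
  assert (Hu : 0 < h / 2 ^ m) by (apply Rdiv_lt_0_compat; [lra|apply pow_lt; lra]).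
  set (phi := fun t => (D 0%nat (x + t) - D 0%nat x) / t).
  set (q := poly_sum (fun k => D (S k) x / INR (fact (S k))) (S m)).
  set (rho := fun t => phi t - q t).
  assert (Hq : richardson m q s = D 1%nat x).
  { unfold q. rewrite richardson_poly_sum by lia. simpl. field. }
  assert (Hphi : Rabs (richardson m phi s) <= (2 ^ S m - 1) * (2 ^ S m * (M0 / h))).
  { apply richardson_abs_le. intros i Hi. destruct (Hnode i Hi) as [Hin_i Hbd].
    eapply Rle_trans; [apply (difference_quotient_abs_le _ M0); auto|].
    { intros E. rewrite E, Rabs_R0 in Hbd. lra. }
    apply Rle_trans with (2 * M0 / (h / 2 ^ m)).
    - unfold Rdiv. apply Rmult_le_compat_l; [lra|]. apply Rinv_le_contravar; lra.
    - right. simpl. field. split; [lra|apply pow_nonzero; lra]. }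
  assert (Hrho : Rabs (richardson m rho s) <= (2 ^ S m - 1) * (Mp * h ^ S m)).
  { apply richardson_abs_le. intros i Hi. destruct (Hnode i Hi) as [Hin_i Hbd].
    assert (Hne : 2 ^ i * s <> 0) by (intros E; rewrite E, Rabs_R0 in Hbd; lra).
    replace (rho (2 ^ i * s)) with
      ((D 0%nat (x + 2 ^ i * s) - taylor D (S (S m)) x (x + 2 ^ i * s)) / (2 ^ i * s)).
    - eapply Rle_trans; [apply taylor_quotient_abs_le; auto|].
      apply Rmult_le_compat_l; [exact HMp|]. apply pow_incr. split; [apply Rabs_pos|lra].
    - unfold rho, phi, q. rewrite taylor_shift_Sl.
      field. split; intros E; apply Hne; rewrite E; ring. }
  assert (Hsplit : richardson m phi s = richardson m q s + richardson m rho s).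
  { rewrite <- richardson_plus. apply richardson_ext. intros t. unfold rho. ring. }
  assert (HX : 1 <= 2 ^ S m) by (apply pow_R1_Rle; lra).
  assert (HMph : 0 <= Mp * h ^ S m) by (apply Rmult_le_pos; [|apply pow_le]; lra).
  replace (D 1%nat x) with (richardson m phi s - richardson m rho s) by lra.
  replace (4 ^ S m) with (2 ^ S m * 2 ^ S m) by (rewrite <- Rpow_mult_distr; f_equal; ring).
  unfold Rminus at 1. eapply Rle_trans; [apply Rabs_triang|]. rewrite Rabs_Ropp.
  set (X := 2 ^ S m) in *.
  assert ((X - 1) * (X * (M0 / h)) <= X * X * (M0 / h)) by nra.
  assert ((X - 1) * (Mp * h ^ S m) <= X * X * (Mp * h ^ S m))
    by (apply Rmult_le_compat_r; nra).
  lra.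
Qed.

End Interval.

Lemma Rpower_root_pow n r : 0 < r -> Rpower r (/ INR (S n)) ^ S n = r.
Proof.
  intros Hr. rewrite <- Rpower_pow by apply exp_pos.
  rewrite Rpower_mult, Rinv_l by (apply not_0_INR; lia). now apply Rpower_1.
Qed.

Lemma step_size_choice n K M0 Mp M1 H :
  0 <= K -> 0 < M0 -> 0 <= Mp -> 0 < H ->
  (forall h, 0 < h <= H -> M1 <= K * (M0 / h + Mp * h ^ n)) ->
  M1 <= 2 * K * M0 / H \/ M1 <= 2 * K * rpow (Mp / M0) (/ INR (S n)) * M0.
Proof.
  intros HK HM0 HMp HH Hbound.
  destruct (Rle_dec (Mp * H ^ S n) M0) as [Hsmall|Hlarge].
  - left. specialize (Hbound H (conj HH (Rle_refl H))).
    assert (Mp * H ^ n <= M0 / H).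
    { apply Rmult_le_reg_r with H; [exact HH|].
      replace (M0 / H * H) with M0 by (field; lra).
      replace (Mp * H ^ n * H) with (Mp * H ^ S n) by (simpl; ring). exact Hsmall. }
    assert (K * (Mp * H ^ n) <= K * (M0 / H)) by (apply Rmult_le_compat_l; assumption).
    unfold Rdiv in *. lra.
  - right. apply Rnot_le_lt in Hlarge.
    assert (HMp' : 0 < Mp) by (destruct HMp as [|<-]; [assumption|lra]).
    assert (Hr : 0 < Mp / M0) by (apply Rdiv_lt_0_compat; assumption).
    unfold rpow. destruct (Rle_dec (Mp / M0) 0) as [|_]; [lra|].
    set (h := / Rpower (Mp / M0) (/ INR (S n))).
    assert (Hh : 0 < h) by apply Rinv_0_lt_compat, exp_pos.
    assert (Hhpow : Mp * h ^ S n = M0).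
    { unfold h. rewrite pow_inv, Rpower_root_pow by exact Hr. field. lra. }
    assert (HhH : h <= H).
    { destruct (Rle_dec h H) as [|HhH]; [assumption|exfalso].
      assert (H ^ S n <= h ^ S n) by (apply pow_incr; lra).
      assert (Mp * H ^ S n <= Mp * h ^ S n) by (apply Rmult_le_compat_l; lra).
      lra. }
    specialize (Hbound h (conj Hh HhH)).
    assert (Hbalance : Mp * h ^ n = M0 / h).
    { apply Rmult_eq_reg_r with h; [|lra].
      replace (Mp * h ^ n * h) with (Mp * h ^ S n) by (simpl; ring). field_simplify; lra. }
    rewrite Hbalance in Hbound.
    replace (Rpower (Mp / M0) (/ INR (S n))) with (/ h) by (unfold h; now rewrite Rinv_inv).
    replace (2 * K * / h * M0) with (K * (M0 / h + M0 / h)) by (field; lra). exact Hbound.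
Qed.

Lemma Rpower_4_plus_half k : Rpower 4 (INR k + / 2) = 2 * 4 ^ k.
Proof.
  rewrite Rpower_plus, Rpower_pow, Rpower_sqrt by lra.
  replace 4 with (2 * 2) at 2 by ring. rewrite sqrt_square by lra. ring.
Qed.

Lemma Rpower_4_S_minus_half k : Rpower 4 (INR (S k) - / 2) = 2 * 4 ^ k.
Proof. rewrite <- Rpower_4_plus_half, S_INR. f_equal. field. Qed.

Theorem proposition4p5 (lambda : R) (p : nat) (D : nat -> R -> R)
  (M0 M1 Mp : R) :
  0 < lambda -> (1 <= p)%nat ->
  Cp_derivs 0 (/ 2 * / sqrt lambda) p D ->
  is_max_on 0 (/ 2 * / sqrt lambda) (fun x => Rabs (D 0%nat x)) M0 ->
  is_max_on 0 (/ 2 * / sqrt lambda) (fun x => Rabs (D 1%nat x)) M1 ->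
  is_max_on 0 (/ 2 * / sqrt lambda) (fun x => Rabs (D p x)) Mp ->
  M1 <= Rpower 4 (INR p + / 2) * sqrt lambda * M0 \/
  M1 <= rpow (Mp / M0) (/ INR p) * Rpower 4 (INR p - / 2) * M0.
Proof.
  intros Hlambda Hp [_ HD] [_ HM0] [[x1 [Hx1 <-]] _] [[xp [_ <-]] HMp].
  destruct p as [|n]; [lia|].
  set (L := / 2 * / sqrt lambda) in *.
  assert (Hsqrt : 0 < sqrt lambda) by now apply sqrt_lt_R0.
  assert (HL : 0 < L) by (unfold L; apply Rmult_lt_0_compat; apply Rinv_0_lt_compat; lra).
  assert (HM0pos : 0 <= M0) by (pose proof (HM0 x1 Hx1); pose proof (Rabs_pos (D 0%nat x1)); lra).
  rewrite Rpower_4_plus_half, Rpower_4_S_minus_half.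
  destruct (Req_dec M0 0) as [HM0z|HM0nz].
  - left.
    assert (Hvanish : forall y, 0 <= y <= L -> D 0%nat y = 0)
      by (intros y Hy; apply Rabs_eq_0, Rle_antisym; [rewrite <- HM0z; auto|apply Rabs_pos]).
    rewrite (deriv_within_of_vanishing 0 L HL (D 0%nat) x1 (D 1%nat x1) Hx1 Hvanish)
      by (apply HD; [lia|exact Hx1]).
    rewrite HM0z, Rabs_R0, Rmult_0_r. lra.
  - destruct (step_size_choice n (4 ^ n) M0 (Rabs (D (S n) xp)) (Rabs (D 1%nat x1)) (L / 2))
      as [Hsmall|Hlarge].
    + apply pow_le. lra.
    + lra.
    + apply Rle_trans with (Rabs (D (S n) x1)); [apply Rabs_pos|apply HMp, Hx1].
    + lra.
    + intros h Hh. apply (deriv1_interpolation_bound 0 L HL n D); auto; lra.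
    + left. replace (2 * 4 ^ S n * sqrt lambda * M0) with (2 * 4 ^ n * M0 / (L / 2))
        by (unfold L; simpl; field; lra). exact Hsmall.
    + right. eapply Rle_trans; [exact Hlarge|right; ring].
Qed.
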